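(* Let $\mathcal D[t]\subset\mathcal H\subset\mathcal D^\times[t^\times]$ be a rigged Hilbert space with $\mathcal D[t]$ reflexive, $(X,\mu)$ a $\sigma$-finite measure space, $\omega,\theta:X\to\mathcal D^\times$ weakly measurable maps and $m:X\to\mathbb C$ measurable such that $D(M_{m,\omega,\theta})=\mathcal D$. (i) If there is $J\in\mathcal L(\mathcal D)$ with $M_{m,\omega,\theta}Jf=f$ for all $f\in\mathcal D$, then the map $\rho:X\to\mathcal D^\times$, $\rho_x=J^\times(\overline{m(x)}\omega_x)$, satisfies $\langle f,g\rangle=\int_X\langle f,\rho_x\rangle\langle\theta_x,g\rangle d\mu$ for all $f,g\in\mathcal D$. (ii) If there is $K\in\mathcal L(\mathcal D^\times)$ with $KM_{m,\omega,\theta}f=f$ for all $f\in\mathcal D$, then the map $\tau:X\to\mathcal D^\times$, $\tau_x=K(m(x)\theta_x)$, satisfies $\langle f,g\rangle=\int_X\langle f,\omega_x\rangle\langle\tau_x,g\rangle d\mu$ for all $f,g\in\mathcal D$.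
   Context: Rigged Hilbert space: $\mathcal D$ dense subspace of Hilbert space $\mathcal H$ with a locally convex topology $t$ finer than the norm topology, $\mathcal D^\times$ its conjugate dual with strong dual topology, $\mathcal H\subset\mathcal D^\times$, the pairing $\langle F,f\rangle$ extends the inner product, and $\langle f,F\rangle:=\overline{\langle F,f\rangle}$. $\omega$ weakly measurable means $x\mapsto\langle f,\omega_x\rangle$ is measurable for each $f\in\mathcal D$. Distribution multiplier $M_{m,\omega,\theta}$: its domain is the set of $f\in\mathcal D$ such that $\int_X m(x)\langle f,\omega_x\rangle\langle\theta_x,g\rangle d\mu$ converges for all $g\in\mathcal D$ and defines a functional of $g$ bounded in the $\mathcal H$-norm; $M_{m,\omega,\theta}f\in\mathcal H$ is the Riesz representative: $\langle M_{m,\omega,\theta}f,g\rangle=\int_X m(x)\langle f,\omega_x\rangle\langle\theta_x,g\rangle d\mu$. $\mathcal L(\mathcal D)$ (resp. $\mathcal L(\mathcal D^\times)$) is the algebra of continuous linear operators on $\mathcal D[t]$ (resp. $\mathcal D^\times[t^\times]$). For $J\in\mathcal L(\mathcal D)$, $J^\times\in\mathcal L(\mathcal D^\times)$ is the adjoint: $\langle F,Jg\rangle=\langle J^\times F,g\rangle$ for $F\in\mathcal D^\times,g\in\mathcal D$; similarly $K\in\mathcal L(\mathcal D^\times)$ has adjoint $K^\times\in\mathcal L(\mathcal D)$. *)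

From HB Require Import structures.
From mathcomp Require Import all_boot all_order all_algebra.
From mathcomp Require Import all_classical all_reals all_analysis.
From mathcomp Require Import complex.

Set Implicit Arguments.
Unset Strict Implicit.
Unset Printing Implicit Defensive.

Import Order.TTheory GRing.Theory Num.Theory numFieldNormedType.Exports.
Local Open Scope classical_set_scope.
Local Open Scope complex_scope.
Local Open Scope ring_scope.

(*  - D^× : continuous conjugate-linear functionals F : D -> C; the pairing  *)
(*        is <F, f> := F f, and <f, F> := conj (F f).                         *)
(*  - H : completion of D for an inner product ip on D (linear in the first  *)
(*        argument) such that t is finer than the norm topology; u in H is   *)
(*        identified (Riesz) with the element g |-> <u, g> of D^×.            *)
(*  - J^× F := F \o J  (since <J^× F, g> = <F, J g>).                         *)

Section RiggedHilbert.
Variables (R : realType) (D : tvsType R[i]).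
Local Notation C := R[i].

Definition conj_linear (F : D -> C) :=
  forall (a : C) (f g : D), F (a *: f + g) = conjc a * F f + F g.

Definition in_dual (F : D -> C) := conj_linear F /\ continuous (F : D -> C^o).

Definition tbounded (B : set D) :=
  forall U : set D, nbhs (0 : D) U ->
    exists s : R, 0 < s /\
      forall r : R, s < r -> B `<=` [set (r%:C) *: u | u in U].

(* strongly bounded subsets of D^× : bounded for the strong topology t^×,
   whose neighbourhoods of 0 have as basis
   [set F | forall f, B f -> `|F f| <= e], B bounded in D, e > 0 *)
Definition sbounded (S : set (D -> C)) :=
  (forall F, S F -> in_dual F) /\
  forall (B : set D) (e : R), tbounded B -> 0 < e ->
    exists s : R, 0 < s /\ forall r : R, s < r ->
      forall F, S F -> forall f, B f -> `|F f| <= (r * e)%:C.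

Definition strong_continuous (K : (D -> C) -> (D -> C)) :=
  forall F0, in_dual F0 ->
  forall (B : set D) (e : R), tbounded B -> 0 < e ->
    exists (B' : set D) (d : R), [/\ tbounded B', 0 < d &
      forall F, in_dual F ->
        (forall f, B' f -> `|F f - F0 f| <= d%:C) ->
        forall f, B f -> `|K F f - K F0 f| <= e%:C].

Definition strong_bidual (Phi : (D -> C) -> C) :=
  (forall (a : C) F G, in_dual F -> in_dual G ->
     Phi (fun f => a * F f + G f) = conjc a * Phi F + Phi G) /\
  (forall F0, in_dual F0 -> forall e : R, 0 < e ->
     exists (B : set D) (d : R), [/\ tbounded B, 0 < d &
       forall F, in_dual F ->
         (forall f, B f -> `|F f - F0 f| <= d%:C) ->
         `|Phi F - Phi F0| <= e%:C]).

(* D[t] is reflexive: the canonical map f |-> (F |-> <f, F> = conj (F f))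
   from D[t] into the strong bidual is onto, and t coincides with the
   strong topology beta(D, D^×) (uniform convergence on strongly bounded
   subsets of D^×). *)
Definition reflexive_tvs :=
  (forall Phi, strong_bidual Phi ->
     exists f : D, forall F, in_dual F -> Phi F = conjc (F f)) /\
  (forall (f0 : D) (U : set D),
     nbhs f0 U <->
     exists (S : set (D -> C)) (e : R), [/\ sbounded S, 0 < e &
        [set f | forall F, S F -> `|F (f - f0)| <= e%:C] `<=` U]).

Definition LD (J : D -> D) :=
  (forall (a : C) (f g : D), J (a *: f + g) = a *: J f + J g) /\ continuous J.

Definition LDx (K : (D -> C) -> (D -> C)) :=
  [/\ forall F, in_dual F -> in_dual (K F),
      forall (a : C) F G, in_dual F -> in_dual G ->
        K (fun f => a * F f + G f) = (fun f => a * K F f + K G f)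
    & strong_continuous K].

Definition dual_adj (J : D -> D) (F : D -> C) : D -> C := fun g => F (J g).

Definition dual_scale (a : C) (F : D -> C) : D -> C := fun g => a * F g.

Definition is_inner (ip : D -> D -> C) :=
  [/\ forall (a : C) f g h, ip (a *: f + g) h = a * ip f h + ip g h,
      forall f g, ip g f = conjc (ip f g),
      forall f, 0 <= complex.Re (ip f f)
    & forall f, ip f f = 0 -> f = 0].

Definition hnorm (ip : D -> D -> C) (f : D) : R := Num.sqrt (complex.Re (ip f f)).

(* D ⊂ H ⊂ D^× is a rigged Hilbert space: H is the completion of (D, ip)
   (so D is dense in H) and t is finer than the norm topology of H on D. *)
Definition rigged (ip : D -> D -> C) :=
  is_inner ip /\
  forall (f0 : D) (e : R), 0 < e -> nbhs f0 [set f | hnorm ip (f - f0) < e].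

End RiggedHilbert.

Section ComplexIntegral.
Context {R : realType} {d : measure_display} {X : measurableType d}.
Local Notation C := R[i].

Definition cmeasurable (h : X -> C) :=
  measurable_fun setT (fun x => complex.Re (h x)) /\
  measurable_fun setT (fun x => complex.Im (h x)).

Variable mu : {measure set X -> \bar R}.

Definition cintegrable (h : X -> C) :=
  mu.-integrable setT (EFin \o (fun x => complex.Re (h x))) /\
  mu.-integrable setT (EFin \o (fun x => complex.Im (h x))).

Definition cint (h : X -> C) : C :=
  Complex (Rintegral mu setT (fun x => complex.Re (h x)))
          (Rintegral mu setT (fun x => complex.Im (h x))).

End ComplexIntegral.

Section Multiplier.
Context {R : realType} {D : tvsType R[i]}
        {d : measure_display} {X : measurableType d}.
Local Notation C := R[i].

Definition weakly_measurable (w : X -> D -> C) :=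
  forall f : D, cmeasurable (fun x => conjc (w x f)).

Variable mu : {measure set X -> \bar R}.

Definition mult_integrand (m : X -> C) (w th : X -> D -> C) (f g : D) :=
  fun x => m x * conjc (w x f) * th x g.

Definition in_mult_dom (ip : D -> D -> C) (m : X -> C) (w th : X -> D -> C)
    (f : D) :=
  (forall g, cintegrable mu (mult_integrand m w th f g)) /\
  exists c : R, forall g,
    `|cint mu (mult_integrand m w th f g)| <= (c * hnorm ip g)%:C.

(* M_{m,omega,theta} f, as an element of H ⊂ D^× : g |-> <M f, g> *)
Definition mult (m : X -> C) (w th : X -> D -> C) (f : D) : D -> C :=
  fun g => cint mu (mult_integrand m w th f g).

End Multiplier.

(** Part (i) is immediate: the integrand [<f, rho_x> <theta_x, g>] is the
    multiplier integrand of [J f] at [g], whose integral is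
    [<M J f, g> = <f, g>].  For part (ii), reflexivity of [D] turns the
    strongly continuous functional [F |-> conj (K F g)] on [D^x] into
    evaluation at some [g'] in [D], i.e. [K F g = F g'] (the adjoint [K^x]).
    Then [<tau_x, g> = m(x) <theta_x, g'>], so the integral equals
    [<M f, g'> = <K M f, g> = <f, g>]; this last step needs [M f] to lie in
    [D^x], which holds because [M f] is bounded in the Hilbert norm and [t] is
    finer than the norm topology. *)
From HB Require Import structures.
From mathcomp Require Import all_boot all_order all_algebra.
From mathcomp Require Import all_classical all_reals all_analysis.
From mathcomp Require Import complex.
From mathcomp Require Import ring.
Import Order.TTheory GRing.Theory Num.Theory numFieldNormedType.Exports.
Local Open Scope classical_set_scope.
Local Open Scope complex_scope.
Local Open Scope ring_scope.

Section ComplexIntegralLinear.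
Context {R : realType} {d : measure_display} {X : measurableType d}.
Variable mu : {measure set X -> \bar R}.

Lemma Rintegral_scaleD (a : R) {u v : X -> R} :
  mu.-integrable setT (EFin \o u) -> mu.-integrable setT (EFin \o v) ->
  mu.-integrable setT (EFin \o (fun x => a * u x + v x)) /\
  Rintegral mu setT (fun x => a * u x + v x) =
  a * Rintegral mu setT u + Rintegral mu setT v.
Proof.
move=> iu iv.
have iau : mu.-integrable setT (EFin \o (fun x => a * u x)).
  apply: (eq_integrable measurableT) (integrableZl measurableT a iu).
  by move=> x _ /=; rewrite EFinM.
split; last by rewrite RintegralD // RintegralZl.
apply: (eq_integrable measurableT) (integrableD measurableT iau iv).
by move=> x _ /=; rewrite EFinD.
Qed.

Lemma cint_scaleD (b : R[i]) {h1 h2 : X -> R[i]} :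
  cintegrable mu h1 -> cintegrable mu h2 ->
  cintegrable mu (fun x => b * h1 x + h2 x) /\
  cint mu (fun x => b * h1 x + h2 x) = b * cint mu h1 + cint mu h2.
Proof.
case: b => b1 b2 [reh1 imh1] [reh2 imh2].
have ReE x : complex.Re (b1 +i* b2 * h1 x + h2 x) =
    b1 * complex.Re (h1 x) + (- b2 * complex.Im (h1 x) + complex.Re (h2 x)).
  by case: (h1 x) => ? ?; case: (h2 x) => ? ? /=; ring.
have ImE x : complex.Im (b1 +i* b2 * h1 x + h2 x) =
    b1 * complex.Im (h1 x) + (b2 * complex.Re (h1 x) + complex.Im (h2 x)).
  by case: (h1 x) => ? ?; case: (h2 x) => ? ? /=; ring.
have [iRe2 intRe2] := Rintegral_scaleD (- b2) imh1 reh2.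
have [iRe intRe] := Rintegral_scaleD b1 reh1 iRe2.
have [iIm2 intIm2] := Rintegral_scaleD b2 reh1 imh2.
have [iIm intIm] := Rintegral_scaleD b1 imh1 iIm2.
split; first split.
- by apply: (eq_integrable measurableT) iRe => x _ /=; rewrite ReE.
- by apply: (eq_integrable measurableT) iIm => x _ /=; rewrite ImE.
rewrite /cint (eq_Rintegral _ (fun x _ => ReE x)) (eq_Rintegral _ (fun x _ => ImE x)).
rewrite intRe intRe2 intIm intIm2.
by apply/eqP; rewrite eq_complex /=; apply/andP; split; apply/eqP; ring.
Qed.

End ComplexIntegralLinear.

Section DualSpace.
Context {R : realType} {D : tvsType R[i]}.
Local Notation C := R[i].

Lemma tbounded_set1 (g : D) : tbounded [set g].
Proof.
move=> U U0.
have := @scale_continuous C D (0, g) U; rewrite /= scale0r => /(_ U0).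
case=> /= [[A B] [/= nA nB] AB_U].
move/nbhs_ballP: nA => [e /= e0 eA].
have ei0 : 0 < e^-1 by rewrite invr_gt0.
have eiE : e^-1 = (complex.Re e^-1)%:C.
  by have := ger0_Im (ltW ei0); case: (e^-1) => a b /= ->.
exists (complex.Re e^-1); split; first by rewrite -ltcR -eiE.
move=> r eir _ ->.
have r0 : 0 < r%:C by rewrite ltcR; apply: lt_trans eir; rewrite -ltcR -eiE.
exists ((r%:C)^-1 *: g); last by rewrite scalerA mulfV ?scale1r // gt_eqF.
apply: (AB_U ((r%:C)^-1, g)); split => /=; last exact: nbhs_singleton.
apply: eA; rewrite /ball /= sub0r normrN ger0_norm; last by rewrite invr_ge0 ltW.
by rewrite invf_plt ?posrE // eiE ltcR.
Qed.

Lemma in_dual_scale (a : C) (F : D -> C) :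
  in_dual F -> in_dual (dual_scale a F).
Proof.
move=> [Flin Fcont]; split; first by move=> b f g; rewrite /dual_scale Flin; ring.
by move=> g0; apply: cvgM; [exact: cvg_cst | exact: Fcont].
Qed.

(* Continuity comes from [t] being finer than the norm topology of [H]. *)
Lemma hnorm_bounded_in_dual {ip : D -> D -> C} {F : D -> C} {c : R} :
  rigged ip -> conj_linear F ->
  (forall g, `|F g| <= (c * hnorm ip g)%:C) -> in_dual F.
Proof.
move=> [_ t_finer] Flin Fbound; split => // g0.
apply/cvgrPdist_le => e e0.
have eE : e = (complex.Re e)%:C.
  by have := ger0_Im (ltW e0); case: e {e0} => a b /= ->.
have eR0 : 0 < complex.Re e by rewrite -ltcR -eE.
pose c' := `|c| + 1.
have c'0 : 0 < c' by rewrite /c' ltr_pwDr.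
apply: filterS (t_finer g0 (complex.Re e / c') _); last by rewrite divr_gt0.
move=> t /= near_t.
have -> : F g0 - F t = - F (t - g0).
  have -> : t - g0 = (-1) *: g0 + t by rewrite scaleN1r addrC.
  by rewrite Flin rmorphN1 mulN1r opprD opprK addrC.
rewrite normrN; apply: le_trans (Fbound (t - g0)) _.
have hn0 : 0 <= hnorm ip (t - g0) by rewrite /hnorm sqrtr_ge0.
rewrite eE lecR; apply: le_trans (_ : c' * hnorm ip (t - g0) <= _).
  by apply: ler_wpM2r => //; rewrite /c' (le_trans (ler_norm c)) // lerDl.
by rewrite -ler_pdivlMl // mulrC ltW.
Qed.

(* Reflexivity represents the strongly continuous functional
   [F |-> conj (K F g)] on [D^x] by a point [g'] of [D]: this is [K^x g]. *)
Lemma reflexive_LDx_adjoint {K : (D -> C) -> (D -> C)} :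
  reflexive_tvs D -> LDx K ->
  forall g : D, exists g' : D, forall F, in_dual F -> K F g = F g'.
Proof.
move=> [bidual_onto _] [_ Klin Kcont] g.
have [g' Hg'] : exists g' : D, forall F, in_dual F -> conjc (K F g) = conjc (F g').
  apply: bidual_onto; split.
    by move=> a F G dF dG; rewrite Klin // rmorphD rmorphM.
  move=> F0 dF0 e e0.
  have [B [dl [tB dl0 KB]]] := Kcont F0 dF0 [set g] e (tbounded_set1 g) e0.
  exists B, dl; split => // F dF FB.
  by rewrite -rmorphB normcJ; apply: KB.
by exists g' => F dF; apply: (can_inj (@conjcK R)); exact: Hg'.
Qed.

End DualSpace.

Section MultiplierInverses.
Context {R : realType} {D : tvsType R[i]}
        {d : measure_display} {X : measurableType d}.
Local Notation C := R[i].
Variables (mu : {measure set X -> \bar R}) (ip : D -> D -> C).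
Variables (m : X -> C) (omega theta : X -> D -> C).
Hypothesis theta_dual : forall x, in_dual (theta x).

Lemma mult_conj_linear {f : D} :
  (forall g, cintegrable mu (mult_integrand m omega theta f g)) ->
  conj_linear (mult mu m omega theta f).
Proof.
move=> intf a g h; rewrite /mult.
have -> : mult_integrand m omega theta f (a *: g + h) =
    (fun x => a^* * mult_integrand m omega theta f g x
              + mult_integrand m omega theta f h x).
  by apply: funext => x; rewrite /mult_integrand (theta_dual x).1; ring.
exact: (cint_scaleD mu _ (intf g) (intf h)).2.
Qed.

Lemma mult_in_dual (f : D) :
  rigged ip -> in_mult_dom mu ip m omega theta f ->
  in_dual (mult mu m omega theta f).
Proof.
move=> rig [intf [c bound]].
exact: hnorm_bounded_in_dual rig (mult_conj_linear intf) bound.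
Qed.

Hypothesis mult_dom_full : forall f, in_mult_dom mu ip m omega theta f.

Lemma mult_right_inverse_reconstruction (J : D -> D) :
  (forall f g, mult mu m omega theta (J f) g = ip f g) ->
  let rho := fun x => dual_adj J (dual_scale (conjc (m x)) (omega x)) in
  forall f g,
    cintegrable mu (fun x => conjc (rho x f) * theta x g) /\
    ip f g = cint mu (fun x => conjc (rho x f) * theta x g).
Proof.
move=> MJ rho f g.
have -> : (fun x => conjc (rho x f) * theta x g) =
    mult_integrand m omega theta (J f) g.
  apply: funext => x; rewrite /rho /dual_adj /dual_scale /mult_integrand.
  by rewrite (conjc_is_multiplicative R).1 conjcK.
by split; [exact: (mult_dom_full (J f)).1 | rewrite -MJ].
Qed.

Lemma mult_left_inverse_reconstruction (K : (D -> C) -> (D -> C)) :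
  rigged ip -> reflexive_tvs D -> LDx K ->
  (forall f g, K (mult mu m omega theta f) g = ip f g) ->
  let tau := fun x => K (dual_scale (m x) (theta x)) in
  forall f g,
    cintegrable mu (fun x => conjc (omega x f) * tau x g) /\
    ip f g = cint mu (fun x => conjc (omega x f) * tau x g).
Proof.
move=> rig refl LK KM tau f g.
have [g' Kg'] := reflexive_LDx_adjoint refl LK g.
have -> : (fun x => conjc (omega x f) * tau x g) =
    mult_integrand m omega theta f g'.
  apply: funext => x; rewrite /tau Kg'; last exact: in_dual_scale.
  by rewrite /dual_scale /mult_integrand; ring.
split; first exact: (mult_dom_full f).1.
by rewrite -KM Kg' //; exact: mult_in_dual.
Qed.

End MultiplierInverses.

Theorem theorem3p3 (R : realType) (D : tvsType R[i]) (ip : D -> D -> R[i])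
    (d : measure_display) (X : measurableType d)
    (mu : {measure set X -> \bar R})
    (omega theta : X -> D -> R[i]) (m : X -> R[i]) :
  rigged ip -> reflexive_tvs D -> sigma_finite setT mu ->
  (forall x, in_dual (omega x)) -> (forall x, in_dual (theta x)) ->
  weakly_measurable omega -> weakly_measurable theta -> cmeasurable m ->
  (forall f : D, in_mult_dom mu ip m omega theta f) ->
  (* (i) *)
  (forall J : D -> D, LD J ->
     (forall f g : D, mult mu m omega theta (J f) g = ip f g) ->
     let rho := fun x => dual_adj J (dual_scale (conjc (m x)) (omega x)) in
     forall f g : D,
       cintegrable mu (fun x => conjc (rho x f) * theta x g) /\
       ip f g = cint mu (fun x => conjc (rho x f) * theta x g)) /\
  (* (ii) *)
  (forall K : (D -> R[i]) -> (D -> R[i]), LDx K ->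
     (forall f g : D, K (mult mu m omega theta f) g = ip f g) ->
     let tau := fun x => K (dual_scale (m x) (theta x)) in
     forall f g : D,
       cintegrable mu (fun x => conjc (omega x f) * tau x g) /\
       ip f g = cint mu (fun x => conjc (omega x f) * tau x g)).
Proof.
move=> rig refl _ _ theta_dual _ _ _ dom; split.
- by move=> J _; exact: mult_right_inverse_reconstruction.
- by move=> K LK; exact: mult_left_inverse_reconstruction.
Qed.
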